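(* Let $n\ge 2$ and $k=2$. For any storage network with node set $\mathcal{N}=\{1,\dots,n\}$ and symmetric RTT function $\tau$, there exists an uncoded storage scheme $\mathcal{C}$ such that $L_{max}^{(i)}(\mathcal{C})=\lambda_{1}^{(i)}$ for every $i\in\mathcal{N}$ and $L_{avg}(\mathcal{C})=\frac{1}{2n}\sum_{i\in\mathcal{N}}\left(\lambda_0^{(i)}+\lambda_1^{(i)}\right)$; that is, $\mathcal{C}$ meets the lower bounds $L_{max}^{(i)}\ge\lambda_{k-1}^{(i)}$ and $L_{avg}\ge\frac{1}{kn}\sum_i\sum_{j=0}^{k-1}\lambda_j^{(i)}$, valid for all linear storage codes, with equality.
   Context: A storage network consists of $n$ nodes $\mathcal{N}=\{1,\dots,n\}$ and a round-trip-time function $\tau:\mathcal{N}\times\mathcal{N}\to\mathbb{R}_{\ge0}$ with $\tau(i,j)=\tau(j,i)$, $\tau(i,i)=0$, and $k$ information files $W_1,\dots,W_k$. An uncoded storage scheme stores at node $i$ one file $X_i=W_{\sigma(i)}$ for a map $\sigma:\mathcal{N}\to[k]$. The latency $l_j^{(i)}$ of node $i$ for file $W_j$ is $\min\{\tau(t,i): \sigma(t)=j\}$ (the least wait time after which some node storing $W_j$ is reachable). $L_{max}^{(i)}(\mathcal{C})=\max_{j\in[k]}l_j^{(i)}$ and $L_{avg}(\mathcal{C})=\frac{1}{kn}\sum_{i\in\mathcal{N}}\sum_{j\in[k]}l_j^{(i)}$. For node $i$, $\lambda_0^{(i)}\le\dots\le\lambda_{n-1}^{(i)}$ is the sorted list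 of $\{\tau(j,i):j\in\mathcal{N}\}$, so $\lambda_0^{(i)}=0$. *)

(* Nodes are 'I_n (node i+1 of the paper is i : 'I_n),
   files are 'I_k (file W_{j+1} is j : 'I_k). *)
From mathcomp Require Import all_boot all_order all_algebra.
Set Implicit Arguments. Unset Strict Implicit. Unset Printing Implicit Defensive.
Import Order.TTheory GRing.Theory Num.Theory.
Local Open Scope ring_scope.

Definition rtt_function (R : realFieldType) (n : nat) (tau : 'I_n -> 'I_n -> R) :=
  [/\ forall i j, tau i j = tau j i, forall i, tau i i = 0 & forall i j, 0 <= tau i j].

(* An uncoded storage scheme is sigma : 'I_n -> 'I_k (node i stores W_(sigma i)).
   A valid scheme stores every file somewhere. *)
Definition stores_all_files (n k : nat) (sigma : 'I_n -> 'I_k) :=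
  forall j : 'I_k, exists t : 'I_n, sigma t = j.

(* Latency l_j^(i) = min { tau t i | sigma t = j }.  The min is taken with the
   initial value max_t tau t i, which is >= every tau t i, so it equals the true
   minimum whenever some node stores W_j. *)
Definition latency (R : realFieldType) (n k : nat) (tau : 'I_n -> 'I_n -> R)
  (sigma : 'I_n -> 'I_k) (i : 'I_n) (j : 'I_k) : R :=
  \big[Order.min/ \big[Order.max/0]_(t < n) tau t i]_(t < n | sigma t == j) tau t i.

Definition L_max (R : realFieldType) (n k : nat) (tau : 'I_n -> 'I_n -> R)
  (sigma : 'I_n -> 'I_k) (i : 'I_n) : R :=
  \big[Order.max/0]_(j < k) latency tau sigma i j.

Definition L_avg (R : realFieldType) (n k : nat) (tau : 'I_n -> 'I_n -> R)
  (sigma : 'I_n -> 'I_k) : R :=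
  (k * n)%:R^-1 * \sum_(i < n) \sum_(j < k) latency tau sigma i j.

(* lambda_m^(i): the m-th smallest (0-indexed) element of the multiset
   { tau(j,i) : j in N }. *)
Definition lambda (R : realFieldType) (n : nat) (tau : 'I_n -> 'I_n -> R)
  (i : 'I_n) (m : nat) : R :=
  nth 0 (sort <=%O [seq tau t i | t <- enum 'I_n]) m.

(** Let every node [v] pick a nearest other node [f v], ties broken so that
    [f v] is the unique minimiser of a key which is symmetric in its two
    arguments.  The graph of [f] then has no cycle longer than two: at the node
    [v] with the largest key to [f v], no node other than [f v] can choose [v],
    so removing [v] and coloring it opposite to [f v] gives, by induction, a
    two-coloring [c] in which every node and its nearest neighbor differ.
    Storing file [c v] at node [v], every node holds one file at distance
    [0 = lambda_0] and reaches the other one at distance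
    [tau (f v) v = lambda_1], so both lower bounds are attained at once. *)
From mathcomp Require Import all_boot all_order all_algebra.

Set Implicit Arguments.
Unset Strict Implicit.
Unset Printing Implicit Defensive.

Import Order.TTheory GRing.Theory Num.Theory.

Section NearestNeighborBicoloring.

Variables (d : Order.disp_t) (T : finType) (K : orderType d).
Variables (key : T -> T -> K) (f : T -> T).
Hypothesis keyC : forall u v, key u v = key v u.
Hypothesis key_inj : forall v, injective (key v).
Hypothesis f_neq : forall v, f v != v.
Hypothesis f_min : forall u v, u != v -> (key v (f v) <= key v u)%O.

Lemma mutual_nearest u v :
  (key u (f u) <= key v (f v))%O -> u != v -> f u = v -> u = f v.
Proof.
move=> le_uv neq_uv fu_v; apply: (@key_inj v); apply/le_anti.
by rewrite f_min // andbT keyC -{1}fu_v.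
Qed.

Lemma bicoloring_on (S : {set T}) :
  exists c : T -> bool, {in S, forall v, f v \in S -> c (f v) != c v}.
Proof.
have [m] := ubnP #|S|; elim: m S => // m IH S ltSm.
have [->|[w wS]] := set_0Vmem S; first by exists xpredT => v; rewrite inE.
have [v vS v_max] := @arg_maxP _ K _ w (mem S) (fun u => key u (f u)) wS.
have /IH [c c_ok] : #|S :\ v| < m by rewrite (cardsD1 v) (vS : v \in S) in ltSm.
exists (fun u => if u == v then ~~ c (f v) else c u) => u uS fuS.
have [-> | neq_uv] := eqVneq u v; first by rewrite (negbTE (f_neq v)); case: (c _).
have [fu_v | fu_neq_v] := eqVneq (f u) v.
  by rewrite (mutual_nearest (v_max u uS) neq_uv fu_v); case: (c _).
by rewrite c_ok // !inE ?neq_uv ?fu_neq_v.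
Qed.

Lemma nearest_neighbor_bicoloring : exists c : T -> bool, forall v, c (f v) != c v.
Proof.
by have [c c_ok] := bicoloring_on [set: T]; exists c => v; apply: c_ok; rewrite inE.
Qed.

End NearestNeighborBicoloring.

Lemma sort_cons_min (d : Order.disp_t) (T : orderType d) (x : T) (s : seq T) :
  all (>= x)%O s -> sort <=%O (x :: s) = x :: sort <=%O s.
Proof.
move=> x_min; apply: (sorted_eq le_trans le_anti).
- exact: sort_sorted le_total _.
- by rewrite /= (path_sortedE le_trans) all_sort x_min sort_sorted //; apply: le_total.
- by rewrite perm_sort perm_cons perm_sym perm_sort.
Qed.

Lemma ord2_neq (a b l : 'I_2) : b != a -> (l != a) = (l == b).
Proof. by case: a b l => [[|[|?]] ?] [[|[|?]] ?] [[|[|?]] ?]. Qed.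

Local Open Scope ring_scope.

Definition closest_to (R : realFieldType) (n : nat) (tau : 'I_n -> 'I_n -> R)
    (i j : 'I_n) :=
  j != i /\ forall t, t != i -> tau j i <= tau t i.

Section ClosestNode.

Variables (R : realFieldType) (n : nat) (tau : 'I_n -> 'I_n -> R) (i j : 'I_n).
Hypothesis tau_rtt : rtt_function tau.
Hypothesis j_closest : closest_to tau i j.

Lemma sort_distances : sort <=%O [seq tau t i | t <- enum 'I_n] =
  0 :: tau j i :: sort <=%O [seq tau t i | t <- rem j (rem i (enum 'I_n))].
Proof.
have [_ tau_ii tau_ge0] := tau_rtt; have [j_neq_i j_min] := j_closest.
set r := rem j (rem i _).
have perm_nodes : perm_eq (enum 'I_n) (i :: j :: r).
  apply: perm_trans (perm_to_rem (mem_enum _ i)) _; rewrite perm_cons.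
  by apply: perm_to_rem; rewrite mem_rem_uniq ?enum_uniq // inE j_neq_i mem_enum.
have r_far : all (>= tau j i) [seq tau t i | t <- r].
  apply/allP => _ /mapP[t + ->]; rewrite mem_rem_uniq ?rem_uniq ?enum_uniq //.
  rewrite inE mem_rem_uniq ?enum_uniq // inE => /andP[_ /andP[t_neq_i _]].
  exact: j_min.
have /(perm_sortP le_total le_trans le_anti) -> := perm_map (tau^~ i) perm_nodes.
rewrite /= tau_ii sort_cons_min ?(sort_cons_min r_far) //=.
by rewrite tau_ge0; apply/allP => _ /mapP[t _ ->].
Qed.

Lemma lambda0 : lambda tau i 0 = 0.
Proof. by rewrite /lambda sort_distances. Qed.

Lemma lambda1 : lambda tau i 1 = tau j i.
Proof. by rewrite /lambda sort_distances. Qed.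

Lemma latency_own (k : nat) (sigma : 'I_n -> 'I_k) : latency tau sigma i (sigma i) = 0.
Proof.
have [_ tau_ii tau_ge0] := tau_rtt; apply/le_anti/andP; split.
  by rewrite -(tau_ii i); apply: bigmin_le_cond.
by apply: le_bigmin => [|t _]; [apply: bigmax_ge_id | apply: tau_ge0].
Qed.

Lemma latency_closest (k : nat) (sigma : 'I_n -> 'I_k) :
  sigma j != sigma i -> latency tau sigma i (sigma j) = tau j i.
Proof.
move=> sigma_ji; apply/le_anti/andP; split; first exact: bigmin_le_cond.
apply: le_bigmin => [|t /eqP sigma_tj]; first exact: (le_bigmax_cond _ (P := predT)).
by apply: j_closest.2; apply: contra_neq sigma_ji => t_i; rewrite -sigma_tj t_i.
Qed.

Lemma L_max_two_files (sigma : 'I_n -> 'I_2) :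
  sigma j != sigma i -> L_max tau sigma i = tau j i.
Proof.
move=> sigma_ji; have [_ _ tau_ge0] := tau_rtt.
apply/le_anti/andP; split; last by rewrite -(latency_closest sigma_ji); apply: le_bigmax.
apply: bigmax_le => // l _.
have [-> | ] := eqVneq l (sigma i); first by rewrite latency_own.
by rewrite (ord2_neq _ sigma_ji) => /eqP ->; rewrite latency_closest.
Qed.

Lemma sum_latency_two_files (sigma : 'I_n -> 'I_2) :
  sigma j != sigma i -> \sum_(l < 2) latency tau sigma i l = tau j i.
Proof.
move=> sigma_ji; rewrite (bigD1 (sigma i)) //= (big_pred1 (sigma j)) => [|l /=].
  by rewrite latency_own latency_closest // add0r.
exact: ord2_neq.
Qed.

End ClosestNode.

Section NearestNeighbor.

Variables (R : realFieldType) (n : nat) (tau : 'I_n.+2 -> 'I_n.+2 -> R).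
Hypothesis tauC : forall u v, tau u v = tau v u.

(* Breaking ties by [u + v] keeps the key symmetric and injective in [u]. *)
Definition tie_key (v u : 'I_n.+2) : R *l nat := (tau u v, (u + v)%N).

Definition other_node (v : 'I_n.+2) : 'I_n.+2 := if v == ord0 then ord_max else ord0.

Definition nearest (v : 'I_n.+2) : 'I_n.+2 :=
  [arg min_(u < other_node v | u != v) tie_key v u]%O.

Lemma nearest_spec v :
  nearest v != v /\ forall u, u != v -> (tie_key v (nearest v) <= tie_key v u)%O.
Proof.
have other_neq : other_node v != v.
  by rewrite /other_node; have [-> // | ] := eqVneq v ord0; rewrite eq_sym.
by rewrite /nearest; case: arg_minP.
Qed.

Lemma nearest_closest v : closest_to tau v (nearest v).
Proof.
have [nearest_neq nearest_min] := nearest_spec v; split => // u /nearest_min.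
by rewrite lexi_pair => /andP[].
Qed.

Lemma nearest_bicoloring : exists c : 'I_n.+2 -> bool, forall v, c (nearest v) != c v.
Proof.
apply: (@nearest_neighbor_bicoloring _ _ _ tie_key).
- by move=> u v; rewrite /tie_key tauC addnC.
- by move=> v u w [_ /addIn /val_inj].
- by move=> v; have [] := nearest_spec v.
- by move=> u v; have [_] := nearest_spec v; apply.
Qed.

End NearestNeighbor.

Theorem corollary1 (R : realFieldType) (n : nat) (tau : 'I_n -> 'I_n -> R) :
  (2 <= n)%N -> rtt_function tau ->
  exists sigma : 'I_n -> 'I_2,
    [/\ stores_all_files sigma,
        forall i : 'I_n, L_max tau sigma i = lambda tau i 1 &
        L_avg tau sigma = (2 * n)%:R^-1 * \sum_(i < n) (lambda tau i 0 + lambda tau i 1)].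
Proof.
case: n tau => [|[|n]] // tau _ tau_rtt; have [tauC _ _] := tau_rtt.
have [c c_ok] := nearest_bicoloring tauC.
pose sigma v : 'I_2 := if c v then ord_max else ord0.
have sigma_ok v : sigma (nearest tau v) != sigma v.
  by move: (c_ok v); rewrite /sigma; case: (c _); case: (c _).
have closest v := nearest_closest tau v.
exists sigma; split.
- move=> l; have [-> | ] := eqVneq l (sigma ord0); first by exists ord0.
  by rewrite (ord2_neq _ (sigma_ok ord0)) => /eqP ->; exists (nearest tau ord0).
- move=> i; rewrite (L_max_two_files tau_rtt (closest i) (sigma_ok i)).
  by rewrite (lambda1 tau_rtt (closest i)).
- rewrite /L_avg; congr (_ * _); apply: eq_bigr => i _.
  rewrite (sum_latency_two_files tau_rtt (closest i) (sigma_ok i)).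
  by rewrite (lambda0 tau_rtt (closest i)) (lambda1 tau_rtt (closest i)) add0r.
Qed.
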